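(* Let $P>1$, $\gamma>0$, and let $\hat x(t),l_1(t),l_{-1}(t)\in\mathbb{R}$. Assume $\max_{i\in\{-1,1\}}l_i(t)\le 0$ and \[ \min_{i\in\{-1,1\}}l_i(t)\le-\frac{P}{P-1}\hat x(t)^2. \] For $y(t)\in\mathbb{R}$ define $l_1(t+1),l_{-1}(t+1)$ as follows: if $l_1(t)\ge l_{-1}(t)$, \[ l_1(t+1)=l_1(t)-\gamma^2y(t)^2+\frac{(\gamma^2y(t))^2}{P+\gamma^2-1},\quad l_{-1}(t+1)=l_{-1}(t)-P\hat x(t)^2-\gamma^2y(t)^2+\frac{(P\hat x(t)+\gamma^2y(t))^2}{P+\gamma^2-1}; \] if $l_1(t)<l_{-1}(t)$, \[ l_1(t+1)=l_1(t)-P\hat x(t)^2-\gamma^2y(t)^2+\frac{(P\hat x(t)+\gamma^2y(t))^2}{P+\gamma^2-1},\quad l_{-1}(t+1)=l_{-1}(t)-\gamma^2y(t)^2+\frac{(\gamma^2y(t))^2}{P+\gamma^2-1}. \] Then $l_i(t+1)\le 0$ for $i\in\{-1,1\}$ (for every $y(t)\in\mathbb{R}$). *)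

From Stdlib Require Import Reals.
Open Scope R_scope.

Definition upd_small (P gamma y l : R) : R :=
  l - gamma^2 * y^2 + (gamma^2 * y)^2 / (P + gamma^2 - 1).

Definition upd_big (P gamma xh y l : R) : R :=
  l - P * xh^2 - gamma^2 * y^2 + (P * xh + gamma^2 * y)^2 / (P + gamma^2 - 1).

Definition l1_next (P gamma xh y l1 lm1 : R) : R :=
  if Rle_dec lm1 l1 then upd_small P gamma y l1 else upd_big P gamma xh y l1.

Definition lm1_next (P gamma xh y l1 lm1 : R) : R :=
  if Rle_dec lm1 l1 then upd_big P gamma xh y lm1 else upd_small P gamma y lm1.

From Stdlib Require Import Reals Lra.
Open Scope R_scope.

(* Completing the square in y: the small update subtracts a nonnegative
   multiple of y^2, and the big update exceeds l by at most P xh^2 / (P - 1),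
   with equality exactly when (P - 1) y = P xh.  So l_i <= 0 survives the
   small update, and the min-condition on l_i is what the big update needs.
   Only gamma^2 >= 0 enters. *)

Lemma upd_denom_gt0 (P gamma : R) : 1 < P -> 0 < P + gamma^2 - 1.
Proof. intros HP; pose proof (pow2_ge_0 gamma); lra. Qed.

Lemma upd_small_eq (P gamma y l : R) : P + gamma^2 - 1 <> 0 ->
  upd_small P gamma y l = l - gamma^2 * (P - 1) * y^2 / (P + gamma^2 - 1).
Proof. intros HD; unfold upd_small; field; exact HD. Qed.

Lemma upd_big_eq (P gamma xh y l : R) : P - 1 <> 0 -> P + gamma^2 - 1 <> 0 ->
  upd_big P gamma xh y l =
  l + P / (P - 1) * xh^2
    - gamma^2 * ((P - 1) * y - P * xh)^2 / ((P - 1) * (P + gamma^2 - 1)).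
Proof. intros HP HD; unfold upd_big; field; split; assumption. Qed.

Lemma upd_small_le (P gamma y l : R) : 1 < P -> upd_small P gamma y l <= l.
Proof.
  intros HP.
  pose proof (upd_denom_gt0 P gamma HP) as HD.
  rewrite upd_small_eq by lra.
  assert (0 <= gamma^2 * (P - 1) * y^2 / (P + gamma^2 - 1)); [|lra].
  apply Rle_mult_inv_pos; [|exact HD].
  apply Rmult_le_pos; [apply Rmult_le_pos|]; [apply pow2_ge_0|lra|apply pow2_ge_0].
Qed.

Lemma upd_big_le (P gamma xh y l : R) : 1 < P ->
  upd_big P gamma xh y l <= l + P / (P - 1) * xh^2.
Proof.
  intros HP.
  pose proof (upd_denom_gt0 P gamma HP) as HD.
  rewrite upd_big_eq by lra.
  assert (0 <= gamma^2 * ((P - 1) * y - P * xh)^2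
               / ((P - 1) * (P + gamma^2 - 1))); [|lra].
  apply Rle_mult_inv_pos; [|apply Rmult_lt_0_compat; lra].
  apply Rmult_le_pos; apply pow2_ge_0.
Qed.

Lemma upd_small_nonpos (P gamma y l : R) : 1 < P -> l <= 0 ->
  upd_small P gamma y l <= 0.
Proof. intros HP Hl; pose proof (upd_small_le P gamma y l HP); lra. Qed.

Lemma upd_big_nonpos (P gamma xh y l : R) : 1 < P ->
  l <= - (P / (P - 1)) * xh^2 -> upd_big P gamma xh y l <= 0.
Proof. intros HP Hl; pose proof (upd_big_le P gamma xh y l HP); lra. Qed.

Theorem lemma5 (P gamma xh l1 lm1 : R) :
  1 < P -> 0 < gamma ->
  Rmax l1 lm1 <= 0 ->
  Rmin l1 lm1 <= - (P / (P - 1)) * xh^2 ->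
  forall y : R,
    l1_next P gamma xh y l1 lm1 <= 0 /\ lm1_next P gamma xh y l1 lm1 <= 0.
Proof.
  intros HP _ Hmax Hmin y.
  pose proof (Rle_trans _ _ _ (Rmax_l l1 lm1) Hmax) as Hl1.
  pose proof (Rle_trans _ _ _ (Rmax_r l1 lm1) Hmax) as Hlm1.
  unfold l1_next, lm1_next.
  destruct (Rle_dec lm1 l1) as [Hle | Hlt].
  - rewrite Rmin_right in Hmin by exact Hle.
    split; [apply upd_small_nonpos | apply upd_big_nonpos]; assumption.
  - rewrite Rmin_left in Hmin by lra.
    split; [apply upd_big_nonpos | apply upd_small_nonpos]; assumption.
Qed.
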